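(* Let $n>0$ be an integer and let $(\xi_k)_{k\geq 0}$ be a sequence of positive real numbers. Suppose there exist $k_0>0$ and real numbers $A_1,A_2>0$, $\alpha>\beta>0$ and $\epsilon>0$ such that $$\xi_1\leq \exp\Big(-\alpha\sum_{i=1}^n\frac{1}{k_0+i}\Big)\xi_0+A_1$$ and, for every integer $k\geq1$, $$\xi_{k+1}\leq \exp\Big(-\alpha\sum_{i=1}^n\frac{1}{k_0+nk+i}+\frac{\epsilon}{k^2}\Big)\xi_k+\frac{A_2}{(k_0+n(k+1))^{\beta+1}}.$$ Then, with $c:=e^{\epsilon\pi^2/6}$, for every $K\geq1$, $$\xi_K\leq \frac{c(k_0+1)^\alpha}{(k_0+nK)^\alpha}\xi_0+\frac{c(k_0+n+1)^\alpha A_1}{(k_0+nK)^\alpha}+\frac{\frac{c}{\alpha-\beta}e^{\frac{\alpha}{k_0+n+1}}A_2}{n(k_0+nK)^\beta}+\frac{c\,e^{\frac{\alpha}{k_0+n+1}}A_2}{(k_0+nK)^{\beta+1}}.$$ *)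

From Stdlib Require Export Reals.
Open Scope R_scope.

Fixpoint sum1n (n : nat) (f : nat -> R) : R :=
  match n with
  | O => 0
  | S m => sum1n m f + f (S m)
  end.

From Stdlib Require Import Reals Lra Lia.
From Coquelicot Require Import Coquelicot.
Open Scope R_scope.

(* Weighting [xi k] by [(m_k + 1)^alpha], where [m_k = k0 + n k], makes the recursion
   almost additive: since [sum_{i=1}^n 1/(x+i) >= ln ((x+n+1)/(x+1))], the contraction
   factor [exp (-alpha sum_i 1/(m_k + i))] is at most the ratio of consecutive weights.
   The leftover factors [exp (eps/k^2)] multiply to at most [exp (eps zeta(2)) = c]
   (Matsuoka's Wallis-integral proof of the Basel bound), and the weighted forcing terms
   are [O(m_k^(alpha-beta-1))], whose sum along the progression is compared with
   [m_K^(alpha-beta) / (n (alpha-beta))] by the mean value theorem. *)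

Lemma sum1n_le (f g : nat -> R) (n : nat) :
  (forall i, f (S i) <= g (S i)) -> sum1n n f <= sum1n n g.
Proof. intros Hfg; induction n as [|n IH]; simpl; [lra | specialize (Hfg n); lra]. Qed.

Lemma sum1n_telescope (F : nat -> R) (n : nat) :
  sum1n n (fun i => F i - F (pred i)) = F n - F O.
Proof. induction n as [|n IH]; simpl; [ring | rewrite IH; ring]. Qed.

Lemma sum1n_nonneg (f : nat -> R) (n : nat) :
  (forall i, 0 <= f (S i)) -> 0 <= sum1n n f.
Proof. intros Hf; induction n as [|n IH]; simpl; [lra | specialize (Hf n); lra]. Qed.

Lemma sum1n_scal_l (c : R) (f : nat -> R) (n : nat) :
  sum1n n (fun i => c * f i) = c * sum1n n f.
Proof. induction n as [|n IH]; simpl; [ring | rewrite IH; ring]. Qed.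

Ltac continuous_by_derive :=
  intros ?; apply (@ex_derive_continuous R_AbsRing R_NormedModule); auto_derive; auto.

Lemma RInt_antiderivative (F f : R -> R) (a b : R) :
  (forall x, is_derive F x (f x)) -> (forall x, continuous f x) ->
  RInt f a b = F b - F a.
Proof.
  intros HF Hf. apply (@is_RInt_unique R_CompleteNormedModule).
  apply (is_RInt_derive F f); auto.
Qed.

Lemma RInt_lin_comb (p q : R) (f g : R -> R) (a b : R) :
  (forall x, continuous f x) -> (forall x, continuous g x) ->
  RInt (fun x => p * f x + q * g x) a b = p * RInt f a b + q * RInt g a b.
Proof.
  intros Hf Hg. apply (@is_RInt_unique R_CompleteNormedModule).
  apply (@is_RInt_plus R_NormedModule); apply (@is_RInt_scal R_NormedModule);
    apply (@RInt_correct R_CompleteNormedModule), ex_RInt_continuous; auto.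
Qed.

Definition wallis_I (m : nat) : R := RInt (fun x => cos x ^ (2 * m)) 0 (PI / 2).
Definition wallis_J (m : nat) : R := RInt (fun x => x ^ 2 * cos x ^ (2 * m)) 0 (PI / 2).

Lemma wallis_I_0 : wallis_I 0 = PI / 2.
Proof.
  unfold wallis_I; simpl. rewrite RInt_const. unfold scal; simpl; unfold mult; simpl. ring.
Qed.

Lemma wallis_J_0 : wallis_J 0 = (PI / 2) ^ 3 / 3.
Proof.
  unfold wallis_J. rewrite (RInt_antiderivative (fun x => x ^ 3 / 3)).
  - field.
  - intros x. auto_derive; auto. simpl. field.
  - continuous_by_derive.
Qed.

Lemma wallis_I_succ (m : nat) :
  2 * INR (S m) * wallis_I (S m) = (2 * INR m + 1) * wallis_I m.
Proof.
  assert (Hibp : RInt (fun x => 2 * INR (S m) * cos x ^ (2 * S m)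
                                + - (2 * INR m + 1) * cos x ^ (2 * m)) 0 (PI / 2)
                 = sin (PI / 2) * cos (PI / 2) ^ (2 * m + 1) - sin 0 * cos 0 ^ (2 * m + 1)).
  { apply (RInt_antiderivative (fun x => sin x * cos x ^ (2 * m + 1)));
      [intros x | continuous_by_derive].
    auto_derive; auto.
    replace (2 * S m)%nat with (S (S (2 * m))) by lia.
    replace (m + (m + 0) + 1)%nat with (S (2 * m)) by lia.
    rewrite S_INR, S_INR, mult_INR; simpl (INR 2); simpl Nat.pred.
    rewrite <- !tech_pow_Rmult.
    (* both sides agree modulo [sin^2 + cos^2 = 1], scaled by the coefficient of [sin^2] *)
    pose proof (f_equal (fun t => t * ((2 * INR m + 1) * cos x ^ (2 * m))) (sin2_cos2 x)) as Hsc.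
    unfold Rsqr in Hsc; cbv beta in Hsc.
    replace (m + (m + 0))%nat with (2 * m)%nat by lia. lra. }
  rewrite RInt_lin_comb, cos_PI2, sin_0, pow_i in Hibp by (lia || continuous_by_derive).
  unfold wallis_I; lra.
Qed.

Lemma wallis_J_succ (m : nat) :
  wallis_I (S m) = INR (S m) * (2 * INR m + 1) * wallis_J m - 2 * INR (S m) ^ 2 * wallis_J (S m).
Proof.
  set (N := INR (S m)).
  assert (Hibp : RInt (fun x => 1 * cos x ^ (2 * S m)
                   + 1 * (2 * N ^ 2 * (x ^ 2 * cos x ^ (2 * S m))
                          + - (N * (2 * INR m + 1)) * (x ^ 2 * cos x ^ (2 * m)))) 0 (PI / 2)
     = (PI / 2 * cos (PI / 2) ^ (2 * m + 2) + N * (PI / 2) ^ 2 * sin (PI / 2) * cos (PI / 2) ^ (2 * m + 1))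
       - (0 * cos 0 ^ (2 * m + 2) + N * 0 ^ 2 * sin 0 * cos 0 ^ (2 * m + 1))).
  { apply (RInt_antiderivative
      (fun x => x * cos x ^ (2 * m + 2) + N * x ^ 2 * sin x * cos x ^ (2 * m + 1)));
      [intros x | continuous_by_derive].
    auto_derive; auto.
    replace (m + (m + 0) + 2)%nat with (S (S (2 * m))) by lia.
    replace (m + (m + 0) + 1)%nat with (S (2 * m)) by lia.
    replace (2 * S m)%nat with (S (S (2 * m))) by lia.
    simpl Nat.pred.
    replace (m + (m + 0))%nat with (2 * m)%nat by lia.
    assert (HN : N = INR m + 1) by apply S_INR.
    rewrite !S_INR, mult_INR; simpl (INR 2).
    rewrite <- !tech_pow_Rmult.
    pose proof (f_equal (fun t => t * (N * x ^ 2 * (2 * INR m + 1) * cos x ^ (2 * m)))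
                  (sin2_cos2 x)) as Hsc.
    unfold Rsqr in Hsc; cbv beta in Hsc. rewrite HN in *. lra. }
  rewrite RInt_lin_comb, RInt_lin_comb, cos_PI2, sin_0, !pow_i in Hibp
    by (lia || continuous_by_derive).
  unfold wallis_I, wallis_J; lra.
Qed.

Lemma wallis_I_pos (m : nat) : 0 < wallis_I m.
Proof.
  induction m as [|m IH].
  - rewrite wallis_I_0. pose proof PI_RGT_0. lra.
  - pose proof (wallis_I_succ m) as Hrec. pose proof (pos_INR m).
    rewrite S_INR in Hrec. nra.
Qed.

Lemma wallis_J_ge0 (m : nat) : 0 <= wallis_J m.
Proof.
  apply RInt_ge_0.
  - pose proof PI_RGT_0. lra.
  - apply (@ex_RInt_continuous R_CompleteNormedModule); intros z _; revert z; continuous_by_derive.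
  - intros x _. replace (2 * m)%nat with (m + m)%nat by lia.
    rewrite pow_add. apply Rmult_le_pos; [apply pow2_ge_0 | apply Rle_0_sqr].
Qed.

(* The two reduction formulas make [J m / I m] drop by exactly [1 / (2 (m+1)^2)]
   at each step, and [J 0 / I 0 = PI^2/12]. *)
Lemma sum_inv_sq_eq (m : nat) :
  sum1n m (fun i => / INR i ^ 2) = PI ^ 2 / 6 - 2 * (wallis_J m / wallis_I m).
Proof.
  induction m as [|m IH]; cbn [sum1n].
  - rewrite wallis_I_0, wallis_J_0. field. apply PI_neq0.
  - rewrite IH. pose proof (wallis_I_pos m). pose proof (wallis_I_pos (S m)).
    pose proof (wallis_I_succ m) as HI. pose proof (wallis_J_succ m) as HJ.
    assert (HN : 1 <= INR (S m)) by (rewrite S_INR; pose proof (pos_INR m); lra).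
    assert (E1 : wallis_I m = 2 * INR (S m) * wallis_I (S m) / (2 * INR m + 1)).
    { rewrite HI. field. pose proof (pos_INR m); lra. }
    assert (E2 : wallis_J m = (wallis_I (S m) + 2 * INR (S m) ^ 2 * wallis_J (S m))
                              / (INR (S m) * (2 * INR m + 1))).
    { rewrite HJ. field. pose proof (pos_INR m); lra. }
    rewrite E1, E2. rewrite S_INR in *. field. pose proof (pos_INR m). repeat split; lra.
Qed.

Lemma sum_inv_sq_le (m : nat) : sum1n m (fun i => / INR i ^ 2) <= PI ^ 2 / 6.
Proof.
  rewrite sum_inv_sq_eq.
  pose proof (Rdiv_le_0_compat _ _ (wallis_J_ge0 m) (wallis_I_pos m)). lra.
Qed.

Lemma exp_le_compat (x y : R) : x <= y -> exp x <= exp y.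
Proof. intros [Hlt | ->]; [left; apply exp_increasing, Hlt | right; reflexivity]. Qed.

Lemma Rpower_gt_0 (x y : R) : 0 < Rpower x y.
Proof. apply exp_pos. Qed.

Lemma ln_succ_sub_succ_le (y : R) : 0 < y -> ln (y + 1) - ln y <= / y.
Proof.
  intros Hy.
  assert (Hpos : 0 < 1 + / y) by (pose proof (Rinv_0_lt_compat y Hy); lra).
  replace (y + 1) with (y * (1 + / y)) by (field; lra).
  rewrite ln_mult by lra.
  pose proof (ln_le _ _ Hpos (exp_ineq1_le (/ y))) as Hle.
  rewrite ln_exp in Hle. lra.
Qed.

Lemma ln_le_harmonic_sum (x : R) (n : nat) :
  -1 < x -> ln (x + INR n + 1) - ln (x + 1) <= sum1n n (fun i => / (x + INR i)).
Proof.
  intros Hx.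
  replace (ln (x + 1)) with (ln (x + INR 0 + 1)) by (simpl; f_equal; ring).
  rewrite <- (sum1n_telescope (fun i => ln (x + INR i + 1))).
  apply sum1n_le; intros i; simpl pred.
  pose proof (pos_INR i). rewrite S_INR.
  replace (x + (INR i + 1)) with (x + INR i + 1) by ring.
  apply ln_succ_sub_succ_le; lra.
Qed.

Lemma exp_harmonic_sum_mul_le (a x : R) (n : nat) : 0 <= a -> -1 < x ->
  exp (- a * sum1n n (fun i => / (x + INR i))) * Rpower (x + INR n + 1) a <= Rpower (x + 1) a.
Proof.
  intros Ha Hx. unfold Rpower. rewrite <- exp_plus.
  apply exp_le_compat. pose proof (ln_le_harmonic_sum x n Hx). nra.
Qed.

Lemma Rpower_sub (x a b : R) : Rpower x (a - b) = Rpower x a / Rpower x b.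
Proof.
  unfold Rpower, Rdiv. rewrite <- exp_Ropp, <- exp_plus. f_equal. ring.
Qed.

Lemma Rpower_succ_le (y a : R) : 0 < y -> 0 <= a ->
  Rpower (y + 1) a <= exp (a / y) * Rpower y a.
Proof.
  intros Hy Ha. unfold Rpower. rewrite <- exp_plus. apply exp_le_compat.
  pose proof (ln_succ_sub_succ_le y Hy). unfold Rdiv. nra.
Qed.

Lemma Rpower_MVT (a b g : R) : 0 < a < b ->
  exists c, a < c < b /\ Rpower b g - Rpower a g = g * Rpower c (g - 1) * (b - a).
Proof.
  intros [Ha Hab].
  destruct (MVT_cor2 (fun x => Rpower x g) (fun x => g * Rpower x (g - 1)) a b Hab)
    as [c [Hc1 Hc2]]; [intros c Hc; apply derivable_pt_lim_power; lra |].
  exists c; split; assumption.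
Qed.

Lemma Rpower_increment_ge_l (a b g : R) : 0 < a < b -> 1 <= g ->
  g * Rpower a (g - 1) * (b - a) <= Rpower b g - Rpower a g.
Proof.
  intros Hab Hg. destruct (Rpower_MVT a b g Hab) as [c [Hc ->]].
  apply Rmult_le_compat_r; [lra |]. apply Rmult_le_compat_l; [lra |].
  apply Rle_Rpower_l; lra.
Qed.

Lemma Rpower_increment_ge_r (a b g : R) : 0 < a < b -> 0 <= g <= 1 ->
  g * Rpower b (g - 1) * (b - a) <= Rpower b g - Rpower a g.
Proof.
  intros Hab Hg. destruct (Rpower_MVT a b g Hab) as [c [Hc ->]].
  apply Rmult_le_compat_r; [lra |]. apply Rmult_le_compat_l; [lra |].
  replace (g - 1) with (- (1 - g)) by ring. rewrite !Rpower_Ropp.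
  apply Rinv_le_contravar; [apply Rpower_gt_0 | apply Rle_Rpower_l; lra].
Qed.

(* Integral comparison for [t^(g-1)] along an arithmetic progression with step [d]:
   the increment of [p^g / (g d)] over one step dominates the term at the right
   endpoint when [g <= 1] and at the left endpoint when [g >= 1]. *)
Lemma Rpower_sum_arith_le (p : nat -> R) (d g : R) :
  0 < p O -> 0 < d -> (forall j, p (S j) = p j + d) -> 0 < g ->
  forall K, sum1n K (fun j => Rpower (p j) (g - 1))
            <= Rpower (p K) g / (g * d) + Rpower (p K) (g - 1).
Proof.
  intros Hp0 Hd Hp Hg K.
  assert (Hpos : forall j, 0 < p j) by (induction j; [| rewrite Hp]; lra).
  assert (Hstep : forall j, 0 < p j < p (S j)) by (intro j; rewrite Hp; specialize (Hpos j); lra).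
  set (F := fun j => Rpower (p j) g / (g * d)).
  assert (HF0 : 0 <= F O) by (apply Rlt_le, Rdiv_lt_0_compat; [apply Rpower_gt_0 | nra]).
  assert (HFstep : forall j x, g * x * (p (S j) - p j) <= Rpower (p (S j)) g - Rpower (p j) g ->
                               x <= F (S j) - F j).
  { intros j x Hx. replace (p (S j) - p j) with d in Hx by (rewrite Hp; ring).
    unfold F, Rdiv. rewrite <- Rmult_minus_distr_r.
    apply Rle_div_r; [nra | lra]. }
  destruct (Rle_lt_dec 1 g) as [Hg1 | Hg1].
  - set (G := fun j => F j + Rpower (p j) (g - 1)).
    apply Rle_trans with (G K - G O);
      [| unfold G, F in *; cbv beta in *; pose proof (Rpower_gt_0 (p O) (g - 1)); lra].
    rewrite <- sum1n_telescope. apply sum1n_le; intros j; simpl pred; unfold G; cbv beta.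
    enough (Rpower (p j) (g - 1) <= F (S j) - F j) by lra.
    apply HFstep, Rpower_increment_ge_l; auto.
  - apply Rle_trans with (F K - F O);
      [| pose proof (Rpower_gt_0 (p K) (g - 1)); unfold F in *; lra].
    rewrite <- sum1n_telescope. apply sum1n_le; intros j; simpl pred.
    apply HFstep, Rpower_increment_ge_r; auto; lra.
Qed.

Lemma discrete_gronwall (u e b : nat -> R) :
  (forall k, 0 <= e (S k)) -> (forall k, 0 <= b (S k)) ->
  (forall k, (1 <= k)%nat -> u (S k) <= exp (e k) * u k + b k) ->
  forall K, u (S K) <= exp (sum1n K e) * (u 1%nat + sum1n K b).
Proof.
  intros He Hb Hu K. induction K as [|K IH]; cbn [sum1n].
  - rewrite exp_0. lra.
  - specialize (Hu (S K) ltac:(lia)).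
    assert (HE : 1 <= exp (sum1n K e))
      by (pose proof (exp_ineq1_le (sum1n K e)); pose proof (sum1n_nonneg e K He); lra).
    assert (HE' : 1 <= exp (e (S K)))
      by (pose proof (exp_ineq1_le (e (S K))); specialize (He K); lra).
    rewrite exp_plus.
    assert (exp (e (S K)) * u (S K) <= exp (e (S K)) * (exp (sum1n K e) * (u 1%nat + sum1n K b)))
      by (apply Rmult_le_compat_l; lra).
    assert (b (S K) <= exp (sum1n K e) * exp (e (S K)) * b (S K)).
    { rewrite <- (Rmult_1_l (b (S K))) at 1. apply Rmult_le_compat_r; [apply Hb |].
      rewrite <- (Rmult_1_l 1). apply Rmult_le_compat; lra. }
    lra.
Qed.

Section Weighted_recursion.

Variables (n k0 : nat) (xi : nat -> R) (A1 A2 alpha beta eps : R).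
Hypotheses (Hn : (0 < n)%nat) (Hxi : forall k, 0 <= xi k) (HA2 : 0 <= A2)
  (Halpha : 0 <= alpha) (Hbeta : beta < alpha) (Heps : 0 <= eps).
Hypothesis Hfirst :
  xi 1%nat <= exp (- alpha * sum1n n (fun i => / (INR k0 + INR i))) * xi 0%nat + A1.
Hypothesis Hstep : forall k : nat, (1 <= k)%nat ->
  xi (S k) <=
    exp (- alpha * sum1n n (fun i => / (INR k0 + INR n * INR k + INR i))
         + eps / (INR k ^ 2)) * xi k
    + A2 / Rpower (INR k0 + INR n * (INR k + 1)) (beta + 1).

Let m (k : nat) : R := INR k0 + INR n * INR k.
Let w (k : nat) : R := Rpower (m k + 1) alpha * xi k.
Let b (k : nat) : R := A2 * Rpower (m (S k) + 1) alpha / Rpower (m (S k)) (beta + 1).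

Lemma INR_n_ge1 : 1 <= INR n.
Proof. apply (le_INR 1), Hn. Qed.

Lemma m_succ (k : nat) : m (S k) = m k + INR n.
Proof. unfold m. rewrite S_INR. ring. Qed.

Lemma m_ge0 (k : nat) : 0 <= m k.
Proof. unfold m. pose proof (pos_INR k0). pose proof (pos_INR n). pose proof (pos_INR k). nra. Qed.

Lemma weighted_first :
  w 1%nat <= Rpower (INR k0 + 1) alpha * xi 0%nat + Rpower (INR k0 + INR n + 1) alpha * A1.
Proof.
  unfold w. replace (m 1%nat) with (INR k0 + INR n) by (unfold m; simpl; ring).
  pose proof (pos_INR k0).
  pose proof (exp_harmonic_sum_mul_le alpha (INR k0) n Halpha ltac:(lra)) as Hdecay.
  pose proof (Rpower_gt_0 (INR k0 + INR n + 1) alpha).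
  pose proof (Hxi 0%nat).
  apply Rle_trans with (Rpower (INR k0 + INR n + 1) alpha
                        * (exp (- alpha * sum1n n (fun i => / (INR k0 + INR i))) * xi 0%nat + A1)).
  - apply Rmult_le_compat_l; lra.
  - rewrite Rmult_plus_distr_l. apply Rplus_le_compat_r.
    rewrite <- Rmult_assoc, (Rmult_comm (Rpower _ _)). apply Rmult_le_compat_r; [| apply Hdecay]; lra.
Qed.

Lemma weighted_step (k : nat) : (1 <= k)%nat ->
  w (S k) <= exp (eps / INR k ^ 2) * w k + b k.
Proof.
  intros Hk. unfold w, b.
  pose proof (Hstep k Hk) as Hs.
  replace (INR k0 + INR n * (INR k + 1)) with (m (S k)) in Hs by (unfold m; rewrite S_INR; ring).
  rewrite exp_plus in Hs. change (INR k0 + INR n * INR k) with (m k) in Hs.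
  pose proof (m_ge0 k).
  pose proof (exp_harmonic_sum_mul_le alpha (m k) n Halpha ltac:(lra)) as Hdecay.
  rewrite <- m_succ in Hdecay.
  pose proof (Hxi k). pose proof (Rpower_gt_0 (m (S k) + 1) alpha).
  pose proof (exp_pos (eps / INR k ^ 2)).
  set (E := exp (- alpha * sum1n n (fun i => / (m k + INR i)))) in *.
  set (X := exp (eps / INR k ^ 2)) in *.
  set (R' := Rpower (m (S k) + 1) alpha) in *.
  apply Rle_trans with (R' * (E * X * xi k + A2 / Rpower (m (S k)) (beta + 1))).
  - apply Rmult_le_compat_l; lra.
  - rewrite Rmult_plus_distr_l. apply Rplus_le_compat; [| right; unfold Rdiv; ring].
    replace (R' * (E * X * xi k)) with (X * (E * R' * xi k)) by ring.
    apply Rmult_le_compat_l; [lra |]. apply Rmult_le_compat_r; lra.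
Qed.

Lemma b_succ_le (j : nat) :
  b (S j) <= A2 * exp (alpha / (INR k0 + INR n + 1)) * Rpower (m (S (S j))) (alpha - beta - 1).
Proof.
  unfold b. set (y := m (S (S j))).
  assert (Hy : INR k0 + INR n + 1 <= y).
  { unfold y, m. rewrite !S_INR. pose proof (pos_INR j). pose proof INR_n_ge1. nra. }
  assert (Hy0 : 0 < INR k0 + INR n + 1) by (pose proof (pos_INR k0); pose proof (pos_INR n); lra).
  replace (alpha - beta - 1) with (alpha - (beta + 1)) by ring.
  rewrite Rpower_sub. unfold Rdiv.
  rewrite !Rmult_assoc. apply Rmult_le_compat_l; [lra |].
  rewrite <- !Rmult_assoc. apply Rmult_le_compat_r; [left; apply Rinv_0_lt_compat, Rpower_gt_0 |].
  apply Rle_trans with (exp (alpha / y) * Rpower y alpha); [apply Rpower_succ_le; lra |].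
  apply Rmult_le_compat_r; [left; apply Rpower_gt_0 |].
  apply exp_le_compat. apply Rmult_le_compat_l; [lra |]. apply Rinv_le_contravar; lra.
Qed.

Lemma sum_b_succ_le (K : nat) :
  sum1n K b <= A2 * exp (alpha / (INR k0 + INR n + 1)) *
    (Rpower (m (S K)) (alpha - beta) / ((alpha - beta) * INR n)
     + Rpower (m (S K)) (alpha - beta - 1)).
Proof.
  eapply Rle_trans.
  { apply (sum1n_le _ (fun j => A2 * exp (alpha / (INR k0 + INR n + 1))
                                * Rpower (m (S j)) (alpha - beta - 1))), b_succ_le. }
  rewrite sum1n_scal_l. apply Rmult_le_compat_l.
  - pose proof (exp_pos (alpha / (INR k0 + INR n + 1))). nra.
  - apply (Rpower_sum_arith_le (fun j => m (S j))); [| | intros j; apply m_succ | lra].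
    + pose proof (m_ge0 0%nat). pose proof INR_n_ge1. rewrite m_succ. lra.
    + pose proof INR_n_ge1. lra.
Qed.

Lemma b_ge0 (k : nat) : 0 <= b k.
Proof.
  unfold b, Rdiv. apply Rmult_le_pos; [apply Rmult_le_pos |]; [lra | |];
    left; [| apply Rinv_0_lt_compat]; apply Rpower_gt_0.
Qed.

Lemma weighted_bound (K : nat) :
  w (S K) <= exp (eps * PI ^ 2 / 6) *
    (Rpower (INR k0 + 1) alpha * xi 0%nat + Rpower (INR k0 + INR n + 1) alpha * A1 + sum1n K b).
Proof.
  assert (Hgronwall := discrete_gronwall w (fun k => eps / INR k ^ 2) b).
  assert (Hbasel : sum1n K (fun k => eps / INR k ^ 2) <= eps * PI ^ 2 / 6).
  { change (fun k => eps / INR k ^ 2) with (fun k => eps * / INR k ^ 2).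
    rewrite sum1n_scal_l. pose proof (sum_inv_sq_le K).
    unfold Rdiv. rewrite Rmult_assoc. apply Rmult_le_compat_l; lra. }
  eapply Rle_trans; [apply Hgronwall; [| intro; apply b_ge0 | exact weighted_step] |].
  - intros k. apply Rmult_le_pos; [lra |].
    left; apply Rinv_0_lt_compat, pow_lt, lt_0_INR; lia.
  - pose proof (sum1n_nonneg b K (fun k => b_ge0 (S k))).
    pose proof (Rpower_gt_0 (m 1%nat + 1) alpha). pose proof (Hxi 1%nat).
    apply Rmult_le_compat; [left; apply exp_pos | unfold w; nra | apply exp_le_compat, Hbasel |].
    pose proof weighted_first. lra.
Qed.

Lemma xi_weighted_le (K : nat) :
  Rpower (m (S K)) alpha * xi (S K) <= exp (eps * PI ^ 2 / 6) *
    (Rpower (INR k0 + 1) alpha * xi 0%nat + Rpower (INR k0 + INR n + 1) alpha * A1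
     + A2 * exp (alpha / (INR k0 + INR n + 1)) *
       (Rpower (m (S K)) (alpha - beta) / ((alpha - beta) * INR n)
        + Rpower (m (S K)) (alpha - beta - 1))).
Proof.
  apply Rle_trans with (w (S K)).
  - apply Rmult_le_compat_r; [apply Hxi |].
    apply Rle_Rpower_l; [lra |]. pose proof (m_ge0 K). pose proof INR_n_ge1. rewrite m_succ. lra.
  - eapply Rle_trans; [apply weighted_bound |].
    apply Rmult_le_compat_l; [left; apply exp_pos |]. pose proof (sum_b_succ_le K). lra.
Qed.

End Weighted_recursion.

Theorem lemma2 (n : nat) (xi : nat -> R) (k0 : nat)
  (A1 A2 alpha beta eps : R) :
  (0 < n)%nat ->
  (forall k, 0 < xi k) ->
  (0 < k0)%nat ->
  0 < A1 -> 0 < A2 -> 0 < beta -> beta < alpha -> 0 < eps ->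
  xi 1%nat <= exp (- alpha * sum1n n (fun i => / (INR k0 + INR i))) * xi 0%nat + A1 ->
  (forall k : nat, (1 <= k)%nat ->
     xi (S k) <=
       exp (- alpha * sum1n n (fun i => / (INR k0 + INR n * INR k + INR i))
            + eps / (INR k ^ 2)) * xi k
       + A2 / Rpower (INR k0 + INR n * (INR k + 1)) (beta + 1)) ->
  let c := exp (eps * PI ^ 2 / 6) in
  forall K : nat, (1 <= K)%nat ->
    xi K <=
      c * Rpower (INR k0 + 1) alpha / Rpower (INR k0 + INR n * INR K) alpha * xi 0%nat
      + c * Rpower (INR k0 + INR n + 1) alpha * A1 / Rpower (INR k0 + INR n * INR K) alpha
      + (c / (alpha - beta) * exp (alpha / (INR k0 + INR n + 1)) * A2)
          / (INR n * Rpower (INR k0 + INR n * INR K) beta)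
      + c * exp (alpha / (INR k0 + INR n + 1)) * A2
          / Rpower (INR k0 + INR n * INR K) (beta + 1).
Proof.
  intros Hn Hxi _ _ HA2 Hbeta Hab Heps Hfirst Hstep c K HK.
  destruct K as [|K]; [lia |].
  assert (Hbound := xi_weighted_le n k0 xi A1 A2 alpha beta eps Hn
                      (fun k => Rlt_le _ _ (Hxi k)) (Rlt_le _ _ HA2) ltac:(lra) Hab
                      (Rlt_le _ _ Heps) Hfirst Hstep K).
  set (M := INR k0 + INR n * INR (S K)) in *.
  rewrite Rpower_sub in Hbound.
  replace (alpha - beta - 1) with (alpha - (beta + 1)) in Hbound by ring.
  rewrite Rpower_sub in Hbound.
  assert (HnR : 0 < INR n) by (apply lt_0_INR, Hn).
  pose proof (Rpower_gt_0 M alpha). pose proof (Rpower_gt_0 M beta).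
  pose proof (Rpower_gt_0 M (beta + 1)).
  apply Rmult_le_reg_l with (Rpower M alpha); [assumption |].
  eapply Rle_trans; [exact Hbound |].
  right. unfold c. field. repeat split; lra.
Qed.
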